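(* A measure $\mu$ on $\mathbb Z$ is a doubling minimizer if and only if it is constant.
   Context: $\mathbb Z$ is regarded as the infinite path graph with edges $\{j,j+1\}$ and distance $d(i,j)=|i-j|$. A measure $\mu$ is a weight function $\mu:\mathbb Z\to(0,\infty)$, with $\mu(A)=\sum_{v\in A}\mu(v)$. Closed balls are $B(x,r)=\{y:|x-y|\le r\}$. The doubling constant is $C_\mu=\sup\{\mu(B(x,2k+1))/\mu(B(x,k)): x\in \mathbb Z,\ k\in\{0,1,2,\dots\}\}$; $\mu$ is doubling if $C_\mu<\infty$; $C_{\mathbb Z}=\inf\{C_\mu:\mu\text{ doubling}\}$. A doubling minimizer is a doubling measure $\mu$ with $C_\mu=C_{\mathbb Z}$. *)

From HB Require Import structures.
From mathcomp Require Import all_boot all_order all_algebra.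
From mathcomp Require Import all_classical all_reals.
Set Implicit Arguments. Unset Strict Implicit. Unset Printing Implicit Defensive.
Import Order.TTheory GRing.Theory Num.Theory.
Local Open Scope classical_set_scope.
Local Open Scope ring_scope.

(* A measure on Z: a weight function mu : int -> R, assumed positive
   separately where needed.  mu(B(x,r)) for the closed ball
   B(x,r) = {y : |x - y| <= r} = {x - r, ..., x + r}. *)
Definition ball_measure {R : realType} (mu : int -> R) (x : int) (r : nat) : R :=
  \sum_(i < (2 * r).+1) mu (x - r%:Z + i%:Z).

Definition doubling_ratios {R : realType} (mu : int -> R) : set R :=
  [set t | exists (x : int) (k : nat),
      t = ball_measure mu x (2 * k).+1 / ball_measure mu x k].

Definition is_measure {R : realType} (mu : int -> R) : Prop :=
  forall x, 0 < mu x.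

Definition doubling {R : realType} (mu : int -> R) : Prop :=
  is_measure mu /\ has_ubound (doubling_ratios mu).

(* C_mu (meaningful when mu is doubling) *)
Definition doubling_const {R : realType} (mu : int -> R) : R :=
  sup (doubling_ratios mu).

Definition CZ (R : realType) : R :=
  inf [set c | exists mu : int -> R, doubling mu /\ c = doubling_const mu].

Definition doubling_minimizer {R : realType} (mu : int -> R) : Prop :=
  doubling mu /\ doubling_const mu = CZ R.

(* The radius-0 doubling ratio at x is (mu(x-1) + mu x + mu(x+1)) / mu x, which equals 3 for
   a constant measure, while every doubling ratio of a constant measure, (4k+3)/(2k+1), is at
   most 3; so constant measures have C_mu = 3.  If C_mu <= 3, the radius-0 ratios say that mu
   is midpoint concave on Z, and a positive concave function on Z is constant (a nonzero
   increment would make it decrease linearly in one direction and eventually become negative).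
   Hence C_mu >= 3 for every doubling mu, C_Z = 3, and the minimizers are the constants. *)

From mathcomp Require Import all_boot all_order all_algebra.
From mathcomp Require Import all_classical all_reals.
From mathcomp Require Import zify ring lra.
Set Implicit Arguments.
Unset Strict Implicit.
Unset Printing Implicit Defensive.
Import Order.TTheory GRing.Theory Num.Theory.
Local Open Scope classical_set_scope.
Local Open Scope ring_scope.

Section PositiveConcave.

Variables (R : realType) (f : int -> R).
Hypothesis f_gt0 : forall x, 0 < f x.
Hypothesis f_concave : forall x, f (x - 1) + f (x + 1) <= 2 * f x.

Let incr x := f (x + 1) - f x.

Lemma concave_incr_antitone x (n : nat) : incr (x + n%:Z) <= incr x.
Proof.
elim: n => [|n IHn]; first by rewrite addr0.
apply: le_trans IHn; rewrite -[n.+1]addn1 PoszD addrA.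
by have := f_concave (x + n%:Z + 1); rewrite addrK /incr; lra.
Qed.

Lemma concave_le_shiftl x (n : nat) : f (x - n%:Z) <= f x - n%:R * incr x.
Proof.
elim: n => [|n IHn]; first by rewrite subr0 mul0r subr0.
have incr_le := concave_incr_antitone (x - n.+1%:Z) n.+1.
rewrite subrK /incr (_ : x - n.+1%:Z + 1 = x - n%:Z) in incr_le; last by lia.
by move: IHn; rewrite -natr1 mulrDl mul1r /incr; lra.
Qed.

Lemma concave_step_le x : f (x + 1) <= f x.
Proof.
rewrite -subr_le0 -/(incr x) leNgt; apply/negP => incr_gt0.
have [n f_lt] : exists n : nat, f x < n%:R * incr x.
  have := archi_boundP (divr_ge0 (ltW (f_gt0 x)) (ltW incr_gt0)).
  by rewrite ltr_pdivrMr //; exists (Num.bound (f x / incr x)).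
by have := concave_le_shiftl x n; have := f_gt0 (x - n%:Z); lra.
Qed.

End PositiveConcave.

Lemma shift_invariant_cst (R : realType) (f : int -> R) :
  (forall x, f (x + 1) = f x) -> forall x, f x = f 0.
Proof.
move=> f_shift.
have f_shiftn y (n : nat) : f (y + n%:Z) = f y.
  elim: n => [|n IHn]; first by rewrite addr0.
  by rewrite -[n.+1]addn1 PoszD addrA f_shift.
case=> n; first by rewrite -[Posz n]add0r f_shiftn.
by rewrite -(f_shiftn (Negz n) n.+1) NegzE addNr.
Qed.

Lemma positive_concave_cst (R : realType) (f : int -> R) :
  (forall x, 0 < f x) -> (forall x, f (x - 1) + f (x + 1) <= 2 * f x) ->
  forall x, f x = f 0.
Proof.
move=> f_gt0 f_concave; apply: shift_invariant_cst => x.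
apply/le_anti; rewrite concave_step_le //=.
have f_opp_concave y : f (- (y - 1)) + f (- (y + 1)) <= 2 * f (- y).
  have [-> ->] : - (y - 1) = - y + 1 /\ - (y + 1) = - y - 1 by split; lia.
  by rewrite addrC; exact: f_concave.
have := @concave_step_le R (fun y => f (- y)) (fun y => f_gt0 _) f_opp_concave (- x - 1).
by rewrite subrK opprK opprB opprK [1 + x]addrC.
Qed.

Lemma ball_measure0 (R : realType) (mu : int -> R) x : ball_measure mu x 0 = mu x.
Proof. by rewrite /ball_measure big_ord_recr big_ord0 /= add0r subr0 addr0. Qed.

Lemma ball_measure1 (R : realType) (mu : int -> R) x :
  ball_measure mu x 1 = mu (x - 1) + mu x + mu (x + 1).
Proof.
rewrite /ball_measure !big_ord_recr big_ord0 /= add0r addr0.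
by congr (mu _ + mu _ + mu _); lia.
Qed.

Lemma ball_measure_cst (R : realType) (c : R) x r :
  ball_measure (fun=> c) x r = c *+ (2 * r).+1.
Proof. by rewrite /ball_measure sumr_const card_ord. Qed.

Lemma doubling_ratio_le_const (R : realType) (mu : int -> R) x k : doubling mu ->
  ball_measure mu x (2 * k).+1 / ball_measure mu x k <= doubling_const mu.
Proof. by case=> _ ratios_ub; apply: ub_le_sup => //; exists x, k. Qed.

Lemma unit_ratio_le3_concave (R : realType) (mu : int -> R) x : 0 < mu x ->
  ball_measure mu x 1 / ball_measure mu x 0 <= 3 ->
  mu (x - 1) + mu (x + 1) <= 2 * mu x.
Proof. by move=> mu_gt0; rewrite ball_measure1 ball_measure0 ler_pdivrMr //; lra. Qed.

Lemma cst_unit_ratio (R : realType) (c : R) x : 0 < c ->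
  ball_measure (fun=> c) x 1 / ball_measure (fun=> c) x 0 = 3.
Proof.
by move=> c_gt0; rewrite 2!ball_measure_cst -2![c *+ _]mulr_natr; field; lra.
Qed.

Lemma doubling_const_ge3 (R : realType) (mu : int -> R) : doubling mu -> 3 <= doubling_const mu.
Proof.
move=> mu_doubling; rewrite leNgt; apply/negP => C_lt3.
have mu_gt0 := mu_doubling.1.
have ratio_le x := doubling_ratio_le_const x 0 mu_doubling.
have mu_cst : forall x, mu x = mu 0.
  apply: positive_concave_cst => // x; apply: unit_ratio_le3_concave => //.
  exact: le_trans (ratio_le x) (ltW C_lt3).
have := le_lt_trans (ratio_le 0) C_lt3.
by rewrite (funext mu_cst) cst_unit_ratio ?ltxx.
Qed.

Lemma doubling_cst (R : realType) (c : R) : 0 < c ->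
  doubling (fun=> c) /\ doubling_const (fun=> c) = 3.
Proof.
move=> c_gt0.
have ratios_le3 : ubound (doubling_ratios (fun=> c)) 3.
  move=> _ [x [k ->]]; rewrite 2!ball_measure_cst -2![c *+ _]mulr_natr.
  by rewrite ler_pdivrMr ?mulr_gt0 // mulrCA ler_pM2l // -natrM ler_nat; lia.
have ratio3 : doubling_ratios (fun=> c) 3 by exists 0, 0%N; rewrite cst_unit_ratio.
split; first by split=> //; exists 3.
apply/le_anti/andP; split; first by apply: ge_sup => //; exists 3.
by apply: ub_le_sup => //; exists 3.
Qed.

Lemma CZ_eq3 (R : realType) : CZ R = 3.
Proof.
have [one_doubling one_const] := @doubling_cst R 1 ltr01.
rewrite /CZ; set consts := [set _ | _].
have const3 : consts 3 by exists (fun=> 1).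
have consts_ge3 : lbound consts 3.
  by move=> _ [mu [mu_doubling ->]]; exact: doubling_const_ge3.
apply/le_anti/andP; split; last by apply: lb_le_inf => //; exists 3.
by apply: ge_inf => //; exists 3.
Qed.

Theorem theorem4p6 (R : realType) (mu : int -> R) (hmu : forall x, 0 < mu x) :
  doubling_minimizer mu <-> exists c : R, forall x, mu x = c.
Proof.
split=> [[mu_doubling C_eq] | [c mu_c]].
  exists (mu 0); apply: positive_concave_cst => // x.
  apply: unit_ratio_le3_concave => //.
  by rewrite -(CZ_eq3 R) -C_eq; exact: (doubling_ratio_le_const x 0).
have -> : mu = fun=> c by apply: funext.
have c_gt0 : 0 < c by rewrite -(mu_c 0).
have [cst_doubling cst_const] := doubling_cst c_gt0.
by split; rewrite // cst_const CZ_eq3.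
Qed.
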